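(* In the generic model, for every rooted forest $w$ the polynomial $\mathcal P(w)\in\mathbb R[x]$ satisfies $$\mathcal P(w)-\frac{(-c_{-1}x)^{|w|}}{w!}\in\mathbb R[x]_{<|w|},$$ i.e. its coefficient of $x^{|w|}$ is $(-c_{-1})^{|w|}/w!$ and it has no higher terms.
   Context: Generic model: $f\colon[0,\infty)\to\mathbb R$ continuous with $f(\zeta)-c/\zeta=O(\zeta^{-1-\epsilon})$ at infinity; Mellin transform $F(z)=\int_0^\infty f(\zeta)\zeta^{-z}d\zeta=\sum_{n\ge-1}c_nz^n$ near $0$. $H_R$ is the Connes–Kreimer Hopf algebra of rooted trees (forests $w$, $|w|$ number of nodes, $w_v$ subtree at node $v$, antipode $S$). $\phi_s(w)=s^{-z|w|}\prod_{v}F(z|w_v|)$ (multiplicative), $\phi_{R,s}=\phi_\mu^{\star-1}\star\phi_s$ for fixed $\mu>0$, and $\mathcal P(w)\in\mathbb R[x]$ is the polynomial with $\lim_{z\to0}\phi_{R,s}(w)=\mathcal P(w)(\ln\frac s\mu)$. Tree factorial: $w!=\prod_{v\in V(w)}|w_v|$. *)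

From Stdlib Require Import Reals Lra List.
Import ListNotations.
Open Scope R_scope.

Inductive tree : Type := Node : list tree -> tree.
Definition forest := list tree.

Definition prodR (l : list R) : R := fold_right Rmult 1 l.
Definition sumR (l : list R) : R := fold_right Rplus 0 l.

Fixpoint tsize (t : tree) : nat :=
  match t with
  | Node ch =>
      S ((fix fs (l : list tree) : nat :=
            match l with nil => 0%nat | c :: cs => (tsize c + fs cs)%nat end) ch)
  end.
Definition fsize (w : forest) : nat := fold_right (fun t acc => (tsize t + acc)%nat) 0%nat w.

(** tree factorial t! = prod_v |t_v| *)
Fixpoint tfact (t : tree) : nat :=
  match t with
  | Node ch =>
      (tsize (Node ch) *
       (fix fp (l : list tree) : nat :=
          match l with nil => 1%nat | c :: cs => (tfact c * fp cs)%nat end) ch)%nat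
  end.
Definition ffact (w : forest) : nat := fold_right (fun t acc => (tfact t * acc)%nat) 1%nat w.

(** Admissible cuts of a tree: list of pairs (P^C(t), R^C(t)) (pruned forest,
    trunk), including the empty cut (P = [], R = [t]) and the full cut
    (P = [t], R = []).  Hence Delta(t) = sum over this list of P (x) R. *)
Fixpoint tcuts (t : tree) : list (forest * forest) :=
  match t with
  | Node ch =>
      ([Node ch], []) ::
      map (fun pr => (fst pr, [Node (snd pr)]))
        ((fix fc (l : list tree) : list (forest * forest) :=
            match l with
            | nil => [([], [])]
            | c :: cs =>
                flat_map (fun p1 => map (fun p2 => (fst p1 ++ fst p2, snd p1 ++ snd p2)) (fc cs))
                         (tcuts c)
            end) ch)
  end.

(** Coproduct of a forest (multiplicative extension): Delta(w) = sum P (x) R. *)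
Fixpoint fcuts (w : forest) : list (forest * forest) :=
  match w with
  | nil => [([], [])]
  | t :: ts =>
      flat_map (fun p1 => map (fun p2 => (fst p1 ++ fst p2, snd p1 ++ snd p2)) (fcuts ts))
               (tcuts t)
  end.

Definition fchar (g : tree -> R) (w : forest) : R := prodR (map g w).

(** Convolution inverse of a character g (values on trees), defined by the
    recursion (g^{*-1} * g)(t) = 0, i.e.
      g^{*-1}(t) = - sum_{C, R^C(t) <> 1} g^{*-1}(P^C(t)) g(R^C(t)).
    The natural number is fuel (|t| suffices). *)
Fixpoint tinv_fuel (g : tree -> R) (n : nat) (t : tree) : R :=
  match n with
  | O => 0
  | S m =>
      - sumR (map (fun pr =>
                     match snd pr with
                     | nil => 0
                     | _ => fchar (tinv_fuel g m) (fst pr) * fchar g (snd pr)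
                     end) (tcuts t))
  end.
Definition tinv (g : tree -> R) (t : tree) : R := tinv_fuel g (tsize t) t.

Fixpoint Fprod (F : R -> R) (z : R) (t : tree) : R :=
  match t with
  | Node ch =>
      F (z * INR (tsize (Node ch))) *
      (fix fp (l : list tree) : R :=
         match l with nil => 1 | c :: cs => Fprod F z c * fp cs end) ch
  end.
Definition phi (F : R -> R) (s z : R) (t : tree) : R :=
  Rpower s (- (z * INR (tsize t))) * Fprod F z t.

(** phi_{R,s}(w) = (phi_mu^{*-1} * phi_s)(w) *)
Definition phiR (F : R -> R) (mu s z : R) (w : forest) : R :=
  sumR (map (fun pr => fchar (tinv (phi F mu z)) (fst pr) * fchar (phi F s z) (snd pr))
            (fcuts w)).

Definition cont_on_nonneg (f : R -> R) : Prop :=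
  forall x, 0 <= x -> forall eps, 0 < eps ->
    exists delta, 0 < delta /\
      forall y, 0 <= y -> Rabs (y - x) < delta -> Rabs (f y - f x) < eps.

Definition mellin_at (f : R -> R) (z L : R) : Prop :=
  forall eps, 0 < eps ->
    exists A B, 0 < A /\
      forall a b, 0 < a -> a < A -> B < b ->
        exists pr : Riemann_integrable (fun t => f t * Rpower t (- z)) a b,
          Rabs (RiemannInt pr - L) < eps.

(** polynomial with coefficient list P (lowest degree first) evaluated at x *)
Definition peval (P : list R) (x : R) : R := fold_right (fun a acc => a + x * acc) 0 P.

From Stdlib Require Import Reals List Lra Lia Factorial.
Import ListNotations.
Open Scope R_scope.

(* For a forest w with N = |w| nodes and L = ln (s/mu), the renormalized value
   phi_{R,s}(w) is a finite sum over the admissible cuts C of w of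
       T_z(C) * (s/mu)^(-z |R^C|),   T_z(C) = phi_mu^{*-1}(P^C) phi_mu(R^C).
   Writing (s/mu)^(-z n) = exp (-z n L) and expanding the exponential to order
   N, the coefficient of (-L)^j / j! is z^j M_j(z), where M_j is the j-th
   moment sum_C T_z(C) |R^C|^j of the trunk sizes.  Everything therefore rests
   on a "pole-moment" invariant of the list of cuts of w: each T_z(C) has a
   pole of order at most N at z = 0, and z^j M_j(z) tends to a limit p_j as
   z -> 0+, with p_j = 0 for j > N and p_N = c_{-1}^N N! / w!.
   The invariant holds for the empty forest, is multiplicative under disjoint
   union of forests (binomial formula for moments) and passes from a forest
   to the tree obtained by grafting it on a new root; the last step uses the
   Laurent expansion F(z) = c_{-1}/z + sum a_n z^n, the pole raising the order
   by one and multiplying the top moment by c_{-1} (N+1).  Then P(w) has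
   coefficients (-1)^j p_j / j!, whence the leading coefficient
   (-c_{-1})^N / w!. *)

Lemma Rmult_lt_of_lt_div x a b : 0 < b -> x < a / b -> x * b < a.
Proof.
  intros Hb H. apply (Rmult_lt_compat_r b) in H; auto.
  unfold Rdiv in H. rewrite Rmult_assoc, Rinv_l, Rmult_1_r in H; lra.
Qed.

Lemma sumR_app l1 l2 : sumR (l1 ++ l2) = sumR l1 + sumR l2.
Proof. induction l1; simpl; [ring | rewrite IHl1; ring]. Qed.

Lemma prodR_app l1 l2 : prodR (l1 ++ l2) = prodR l1 * prodR l2.
Proof. induction l1; simpl; [ring | rewrite IHl1; ring]. Qed.

Lemma sumR_ext {A} (f g : A -> R) l :
  (forall x, In x l -> f x = g x) -> sumR (map f l) = sumR (map g l).
Proof. intros H; f_equal; apply map_ext_in; auto. Qed.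

Lemma sumR_plus {A} (f g : A -> R) l :
  sumR (map (fun x => f x + g x) l) = sumR (map f l) + sumR (map g l).
Proof. induction l; simpl; [ring | rewrite IHl; ring]. Qed.

Lemma sumR_scal {A} (f : A -> R) k l :
  sumR (map (fun x => k * f x) l) = k * sumR (map f l).
Proof. induction l; simpl; [ring | rewrite IHl; ring]. Qed.

Lemma sumR_scal_r {A} (f : A -> R) k l :
  sumR (map (fun x => f x * k) l) = sumR (map f l) * k.
Proof. induction l; simpl; [ring | rewrite IHl; ring]. Qed.

Lemma sumR_zero {A} (f : A -> R) l :
  (forall x, In x l -> f x = 0) -> sumR (map f l) = 0.
Proof. induction l; simpl; intros H; auto. rewrite H, IHl by auto. ring. Qed.

Lemma sumR_flat_map {A B} (h : B -> R) (k : A -> list B) l :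
  sumR (map h (flat_map k l)) = sumR (map (fun x => sumR (map h (k x))) l).
Proof. induction l; simpl; auto. rewrite map_app, sumR_app, IHl. ring. Qed.

Lemma sumR_swap {A B} (f : A -> B -> R) l1 l2 :
  sumR (map (fun x => sumR (map (fun y => f x y) l2)) l1) =
  sumR (map (fun y => sumR (map (fun x => f x y) l1)) l2).
Proof.
  induction l1; simpl.
  - symmetry; apply sumR_zero; auto.
  - rewrite IHl1, <- sumR_plus. auto.
Qed.

Lemma sum_f_R0_sumR f n : sum_f_R0 f n = sumR (map f (seq 0 (S n))).
Proof.
  induction n; [simpl; ring |].
  rewrite seq_S, map_app, sumR_app. simpl sum_f_R0. rewrite IHn. simpl. ring.
Qed.

Lemma sumR_single (f : nat -> R) N k : (k <= N)%nat ->
  (forall i, (i <= N)%nat -> i <> k -> f i = 0) ->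
  sumR (map f (seq 0 (S N))) = f k.
Proof.
  induction N; intros Hk H.
  - simpl. replace k with 0%nat by lia. ring.
  - rewrite seq_S, map_app, sumR_app.
    replace (sumR (map f [(0 + S N)%nat])) with (f (S N)) by (simpl; ring).
    destruct (Nat.eq_dec k (S N)) as [-> | Hne].
    + rewrite sumR_zero; [ring |]. intros x Hx. apply in_seq in Hx. apply H; lia.
    + rewrite IHN by (try lia; intros; apply H; lia).
      rewrite (H (S N)) by lia. ring.
Qed.

Lemma binomial_sumR x y j :
  (x + y) ^ j = sumR (map (fun i => C j i * x ^ i * y ^ (j - i)) (seq 0 (S j))).
Proof. rewrite binomial, sum_f_R0_sumR. reflexivity. Qed.

Lemma C_diag i : C i i = 1.
Proof.
  unfold C. rewrite Nat.sub_diag. simpl (fact 0). pose proof (INR_fact_neq_0 i).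
  simpl INR. field. auto.
Qed.

Fixpoint tree_nested_ind (P : tree -> Prop)
  (H : forall l, Forall P l -> P (Node l)) (t : tree) : P t :=
  match t with
  | Node l => H l ((fix f (l : list tree) : Forall P l :=
                     match l with
                     | nil => Forall_nil _
                     | c :: cs => Forall_cons _ (tree_nested_ind P H c) (f cs)
                     end) l)
  end.

Lemma fsize_app l1 l2 : fsize (l1 ++ l2) = (fsize l1 + fsize l2)%nat.
Proof. induction l1; simpl; [lia | rewrite IHl1; lia]. Qed.

Lemma fsize_single t : fsize [t] = tsize t.
Proof. unfold fsize; simpl; lia. Qed.

Lemma tsize_Node ch : tsize (Node ch) = S (fsize ch).
Proof. simpl. f_equal. Qed.

Lemma tfact_Node ch : tfact (Node ch) = (S (fsize ch) * ffact ch)%nat.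
Proof.
  change (tsize (Node ch) * ((fix fp (l : list tree) : nat :=
    match l with nil => 1%nat | c :: cs => (tfact c * fp cs)%nat end) ch)
    = S (fsize ch) * ffact ch)%nat.
  rewrite tsize_Node. f_equal.
Qed.

Lemma tsize_pos t : (1 <= tsize t)%nat.
Proof. destruct t. rewrite tsize_Node. lia. Qed.

Lemma tsize_le_fsize u w : In u w -> (tsize u <= fsize w)%nat.
Proof.
  induction w; simpl; intros H; [contradiction |].
  destruct H as [<- | H]; [lia | specialize (IHw H); lia].
Qed.

Lemma fsize_nonnil w : w <> [] -> (1 <= fsize w)%nat.
Proof. destruct w; [congruence |]. simpl. pose proof (tsize_pos t). lia. Qed.

Lemma tfact_pos t : (1 <= tfact t)%nat.
Proof.
  induction t using tree_nested_ind. rewrite tfact_Node.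
  assert (1 <= ffact l)%nat by (induction H; simpl; nia).
  nia.
Qed.

Lemma ffact_pos w : (1 <= ffact w)%nat.
Proof. induction w; simpl; auto. pose proof (tfact_pos a). nia. Qed.

Definition cut_product (l1 l2 : list (forest * forest)) : list (forest * forest) :=
  flat_map (fun p1 => map (fun p2 => (fst p1 ++ fst p2, snd p1 ++ snd p2)) l2) l1.

Lemma fcuts_cons t ts : fcuts (t :: ts) = cut_product (tcuts t) (fcuts ts).
Proof. reflexivity. Qed.

Lemma tcuts_Node ch : tcuts (Node ch) =
  ([Node ch], []) :: map (fun pr => (fst pr, [Node (snd pr)])) (fcuts ch).
Proof. simpl. f_equal. Qed.

Definition cut_preserves_size (t : forest) (l : list (forest * forest)) : Prop :=
  forall c, In c l -> (fsize (fst c) + fsize (snd c) = fsize t)%nat.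

Lemma cut_product_size t1 t2 l1 l2 :
  cut_preserves_size t1 l1 -> cut_preserves_size t2 l2 ->
  cut_preserves_size (t1 ++ t2) (cut_product l1 l2).
Proof.
  intros H1 H2 c Hc. apply in_flat_map in Hc as [c1 [Hc1 Hc]].
  apply in_map_iff in Hc as [c2 [<- Hc2]].
  specialize (H1 _ Hc1). specialize (H2 _ Hc2).
  destruct c1, c2; simpl in *. rewrite !fsize_app. lia.
Qed.

Lemma fcuts_size_of_trees ts :
  Forall (fun t => cut_preserves_size [t] (tcuts t)) ts -> cut_preserves_size ts (fcuts ts).
Proof.
  induction 1 as [|t ts Ht _ IH]; [intros c [<- | []]; reflexivity |].
  rewrite fcuts_cons. change (t :: ts) with ([t] ++ ts). apply cut_product_size; auto.
Qed.

Lemma tcuts_size t : cut_preserves_size [t] (tcuts t).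
Proof.
  induction t as [ch Hch] using tree_nested_ind.
  intros c Hc. rewrite tcuts_Node in Hc. destruct Hc as [<- | Hc]; [simpl; lia |].
  apply in_map_iff in Hc as [[P R0] [<- Hc]].
  pose proof (fcuts_size_of_trees ch Hch _ Hc). cbn [fst snd] in *.
  rewrite !fsize_single, !tsize_Node. lia.
Qed.

Lemma fcuts_size w : cut_preserves_size w (fcuts w).
Proof. apply fcuts_size_of_trees, Forall_forall. intros t _. apply tcuts_size. Qed.

Lemma fchar_app g l1 l2 : fchar g (l1 ++ l2) = fchar g l1 * fchar g l2.
Proof. unfold fchar. rewrite map_app, prodR_app. ring. Qed.

Lemma fchar_single g t : fchar g [t] = g t.
Proof. unfold fchar. simpl. ring. Qed.

Lemma fchar_ext g1 g2 w : (forall u, In u w -> g1 u = g2 u) -> fchar g1 w = fchar g2 w.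
Proof. intros H. unfold fchar. f_equal. apply map_ext_in. auto. Qed.

Lemma tinv_fuel_enough g : forall m m' t, (m' <= m)%nat -> (tsize t <= m')%nat ->
  tinv_fuel g m' t = tinv_fuel g (tsize t) t.
Proof.
  induction m; intros m' t Hm Ht; [pose proof (tsize_pos t); lia |].
  destruct m' as [|k]; [pose proof (tsize_pos t); lia |].
  destruct t as [ch]. rewrite tsize_Node in *. cbn [tinv_fuel]. f_equal.
  apply sumR_ext. intros [P R0] Hpr. pose proof (tcuts_size (Node ch) _ Hpr) as Hs.
  rewrite fsize_single, tsize_Node in Hs. cbn [fst snd] in *.
  destruct R0 as [|t0 R1] eqn:ER; [reflexivity |]. f_equal. apply fchar_ext.
  intros u Hu. pose proof (tsize_le_fsize _ _ Hu).
  assert (1 <= fsize R0)%nat by (apply fsize_nonnil; congruence). subst R0.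
  rewrite (IHm k u), (IHm (fsize ch) u) by lia. reflexivity.
Qed.

(* The defining recursion g^{*-1}(t) = - sum_{C, R^C <> 1} g^{*-1}(P^C) g(R^C),
   the trunk of a nonfull cut being a tree grafted on the root. *)
Lemma tinv_Node g ch : tinv g (Node ch) =
  - sumR (map (fun c => fchar (tinv g) (fst c) * fchar g [Node (snd c)]) (fcuts ch)).
Proof.
  unfold tinv at 1. rewrite tsize_Node. cbn [tinv_fuel]. rewrite tcuts_Node.
  cbn [map sumR fold_right snd]. rewrite Rplus_0_l, map_map. f_equal.
  apply sumR_ext. intros [P R0] Hc. pose proof (fcuts_size _ _ Hc). cbn [fst snd] in *.
  f_equal. apply fchar_ext. intros u Hu. pose proof (tsize_le_fsize _ _ Hu).
  apply (tinv_fuel_enough g (fsize ch)); lia.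
Qed.

Definition lim0 (h : R -> R) (l : R) : Prop := limit1_in h (fun z => 0 < z) l 0.

Lemma lim0_const k : lim0 (fun _ => k) k.
Proof. apply (limit_free (fun _ => k) _ 0 0). Qed.

Lemma lim0_id : lim0 (fun z => z) 0.
Proof. apply lim_x. Qed.

Lemma lim0_plus f g l l' : lim0 f l -> lim0 g l' -> lim0 (fun z => f z + g z) (l + l').
Proof. apply limit_plus. Qed.

Lemma lim0_mult f g l l' : lim0 f l -> lim0 g l' -> lim0 (fun z => f z * g z) (l * l').
Proof. apply limit_mul. Qed.

Lemma lim0_opp f l : lim0 f l -> lim0 (fun z => - f z) (- l).
Proof. apply limit_Ropp. Qed.

Lemma lim0_pow k : lim0 (fun z => z ^ k) (0 ^ k).
Proof. induction k; simpl; [apply lim0_const | apply lim0_mult; auto; apply lim0_id]. Qed.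

Lemma lim0_lim_eq f l l' : l = l' -> lim0 f l -> lim0 f l'.
Proof. intros ->; auto. Qed.

Lemma lim0_ext f g l :
  (exists d, 0 < d /\ forall z, 0 < z < d -> f z = g z) -> lim0 f l -> lim0 g l.
Proof.
  intros [d [Hd H]] Hf eps Heps. destruct (Hf eps Heps) as [alp [Ha Hx]].
  exists (Rmin alp d). split; [apply Rmin_pos; lra |].
  intros x [Dx Hdx]. simpl in Hdx. unfold Rdist in Hdx.
  rewrite Rminus_0_r, Rabs_pos_eq in Hdx by lra.
  pose proof (Rmin_l alp d). pose proof (Rmin_r alp d).
  rewrite <- H by lra. apply Hx. split; auto. simpl. unfold Rdist.
  rewrite Rminus_0_r, Rabs_pos_eq; lra.
Qed.

Lemma lim0_eq f g l : (forall z, 0 < z -> f z = g z) -> lim0 f l -> lim0 g l.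
Proof. intros H. apply lim0_ext. exists 1. split; [lra |]. intros; apply H; lra. Qed.

Lemma lim0_sumR {A} (h : A -> R -> R) (v : A -> R) l :
  (forall x, In x l -> lim0 (h x) (v x)) ->
  lim0 (fun z => sumR (map (fun x => h x z) l)) (sumR (map v l)).
Proof. induction l; simpl; intros H; [apply lim0_const | apply lim0_plus; auto]. Qed.

Lemma lim0_sumR0 {A} (h : A -> R -> R) l :
  (forall x, In x l -> lim0 (h x) 0) -> lim0 (fun z => sumR (map (fun x => h x z) l)) 0.
Proof.
  intros H. apply (lim0_lim_eq _ (sumR (map (fun _ : A => 0) l))).
  - apply sumR_zero; auto.
  - apply lim0_sumR; auto.
Qed.

Lemma lim0_continuous h : continuity_pt h 0 -> lim0 h (h 0).
Proof.
  apply limit1_imp. intros z Hz. split; [exact I | apply Rlt_not_eq, Hz].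
Qed.

Lemma lim0_bound h l :
  (exists d C, 0 < d /\ forall z, 0 < z < d -> Rabs (h z - l) <= C * z) -> lim0 h l.
Proof.
  intros [d [C [Hd H]]] eps Heps. set (e := eps / (Rabs C + 1)).
  assert (He : 0 < e) by (apply Rdiv_lt_0_compat; auto; pose proof (Rabs_pos C); lra).
  exists (Rmin d e). split; [apply Rmin_pos; auto |].
  intros x [Dx Hdx]. simpl in *. unfold Rdist in *.
  rewrite Rminus_0_r, Rabs_pos_eq in Hdx by lra.
  pose proof (Rmin_l d e). pose proof (Rmin_r d e).
  specialize (H x ltac:(lra)). pose proof (Rabs_pos C). pose proof (Rle_abs C).
  assert (x * (Rabs C + 1) < eps) by (apply Rmult_lt_of_lt_div; unfold e in *; lra).
  nra.
Qed.

(** Taylor remainders of convergent power series *)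

Lemma sum_le_term (f : nat -> R) N i :
  (forall n, 0 <= f n) -> (i <= N)%nat -> f i <= sum_f_R0 f N.
Proof.
  intros Hp. induction N; intros Hi.
  - replace i with 0%nat by lia. simpl. lra.
  - rewrite tech5. destruct (Nat.eq_dec i (S N)) as [-> | Hne].
    + pose proof (cond_pos_sum f N Hp). lra.
    + pose proof (IHN ltac:(lia)). pose proof (Hp (S N)). lra.
Qed.

Lemma series_terms_bounded (u : nat -> R) S0 : infinite_sum u S0 ->
  exists B, forall m, Rabs (u m) <= B.
Proof.
  intros H. destruct (H 1 ltac:(lra)) as [N HN].
  exists (2 + sum_f_R0 (fun i => Rabs (u i)) N). intros m.
  pose proof (cond_pos_sum (fun i => Rabs (u i)) N (fun n => Rabs_pos _)).
  destruct (Compare_dec.le_lt_dec m N) as [Hm | Hm].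
  - pose proof (sum_le_term (fun i => Rabs (u i)) N m (fun n => Rabs_pos _) Hm). simpl in *. lra.
  - destruct m as [|m]; [lia |].
    pose proof (HN (S m) ltac:(lia)) as H1. pose proof (HN m ltac:(lia)) as H2.
    rewrite tech5 in H1. unfold Rdist in *.
    replace (u (S m)) with ((sum_f_R0 u m + u (S m) - S0) - (sum_f_R0 u m - S0)) by ring.
    pose proof (Rabs_triang (sum_f_R0 u m + u (S m) - S0) (- (sum_f_R0 u m - S0))).
    rewrite Rabs_Ropp in *. unfold Rminus at 1. lra.
Qed.

Lemma infinite_sum_le (u : nat -> R) V c M K : infinite_sum u V ->
  (forall n, (K <= n)%nat -> Rabs (sum_f_R0 u n - c) <= M) -> Rabs (V - c) <= M.
Proof.
  intros H HB. destruct (Rle_lt_dec (Rabs (V - c)) M) as [Hle | Hlt]; auto.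
  destruct (H (Rabs (V - c) - M) ltac:(lra)) as [N HN].
  specialize (HN (max N K) ltac:(lia)). specialize (HB (max N K) ltac:(lia)).
  unfold Rdist in HN. rewrite Rabs_minus_sym in HN.
  pose proof (Rabs_triang (sum_f_R0 u (max N K) - c) (V - sum_f_R0 u (max N K))).
  replace (sum_f_R0 u (max N K) - c + (V - sum_f_R0 u (max N K))) with (V - c) in * by ring.
  lra.
Qed.

Lemma geometric_tail (u : nat -> R) B q K : 0 <= q <= / 2 ->
  (forall m, Rabs (u m) <= B * q ^ m) ->
  forall d, Rabs (sum_f_R0 u (K + d) - sum_f_R0 u K) <= 2 * B * q ^ S K * (1 - (/ 2) ^ d).
Proof.
  intros Hq Hu. assert (HB : 0 <= B).
  { specialize (Hu 0%nat). pose proof (Rabs_pos (u 0%nat)). simpl in Hu. lra. }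
  induction d.
  - rewrite Nat.add_0_r, Rminus_diag, Rabs_R0. simpl. lra.
  - replace (K + S d)%nat with (S (K + d)) by lia. rewrite tech5.
    specialize (Hu (S (K + d))).
    replace (q ^ S (K + d)) with (q ^ S K * q ^ d) in Hu by (rewrite <- pow_add; f_equal; lia).
    assert (q ^ d <= (/ 2) ^ d) by (apply pow_incr; lra).
    assert (0 <= q ^ S K) by (apply pow_le; lra).
    assert (B * q ^ S K * q ^ d <= B * q ^ S K * (/ 2) ^ d) by (apply Rmult_le_compat_l; nra).
    pose proof (Rabs_triang (sum_f_R0 u (K + d) - sum_f_R0 u K) (u (S (K + d)))).
    replace (sum_f_R0 u (K + d) - sum_f_R0 u K + u (S (K + d)))
      with (sum_f_R0 u (K + d) + u (S (K + d)) - sum_f_R0 u K) in * by ring.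
    simpl ((/ 2) ^ S d). lra.
Qed.

Lemma power_series_tail (b : nat -> R) x0 B x V K : 0 < x0 ->
  (forall m, Rabs (b m * x0 ^ m) <= B) -> Rabs x <= x0 / 2 ->
  infinite_sum (fun m => b m * x ^ m) V ->
  Rabs (V - sum_f_R0 (fun m => b m * x ^ m) K) <= 2 * B * (Rabs x / x0) ^ S K.
Proof.
  intros Hx0 HB Hx HV. set (q := Rabs x / x0).
  assert (Hq : 0 <= q <= / 2).
  { unfold q. split; [apply Rmult_le_pos; [apply Rabs_pos | left; apply Rinv_0_lt_compat; lra] |].
    apply Rmult_le_reg_r with x0; auto. unfold Rdiv. rewrite Rmult_assoc, Rinv_l by lra. lra. }
  assert (Hterm : forall m, Rabs (b m * x ^ m) <= B * q ^ m).
  { intros m. rewrite Rabs_mult, <- RPow_abs.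
    replace (Rabs x) with (x0 * q) by (unfold q; field; lra).
    rewrite Rpow_mult_distr. specialize (HB m). rewrite Rabs_mult in HB.
    rewrite <- (Rabs_pos_eq (x0 ^ m)) by (apply pow_le; lra).
    pose proof (pow_le q m (proj1 Hq)). pose proof (Rabs_pos (b m)). nra. }
  apply (infinite_sum_le _ V _ _ K HV). intros n Hn.
  replace n with (K + (n - K))%nat by lia.
  pose proof (geometric_tail _ B q K Hq Hterm (n - K)).
  assert (0 <= (/ 2) ^ (n - K)) by (apply pow_le; lra).
  assert (HB0 : 0 <= B) by (pose proof (Rabs_pos (b 0%nat * x0 ^ 0)); specialize (HB 0%nat); lra).
  assert (0 <= B * q ^ S K * (/ 2) ^ (n - K)).
  { apply Rmult_le_pos; auto. apply Rmult_le_pos; auto. apply pow_le; lra. }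
  lra.
Qed.

Lemma power_series_taylor (b : nat -> R) (x0 S0 : R) (D : R -> Prop) (v : R -> R) (K : nat) :
  0 < x0 -> infinite_sum (fun m => b m * x0 ^ m) S0 ->
  (forall x, D x -> infinite_sum (fun m => b m * x ^ m) (v x)) ->
  exists d C (eps : R -> R), 0 < d /\ forall x, D x -> Rabs x < d ->
    v x = sumR (map (fun m => b m * x ^ m) (seq 0 (S K))) + x ^ K * eps x /\
    Rabs (eps x) <= C * Rabs x.
Proof.
  intros Hx0 HS Hv. destruct (series_terms_bounded _ _ HS) as [B HB].
  set (C := 2 * B / x0 ^ S K).
  set (p := fun x => sumR (map (fun m => b m * x ^ m) (seq 0 (S K)))).
  exists (x0 / 2), C, (fun x => if Req_EM_T x 0 then 0 else (v x - p x) / x ^ K).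
  split; [lra |]. intros x Dx Hx.
  assert (Ht : Rabs (v x - p x) <= C * Rabs x ^ S K).
  { unfold p. rewrite <- sum_f_R0_sumR.
    pose proof (power_series_tail b x0 B x (v x) K Hx0 HB ltac:(lra) (Hv x Dx)).
    unfold C. replace (2 * B / x0 ^ S K * Rabs x ^ S K) with (2 * B * (Rabs x / x0) ^ S K); auto.
    unfold Rdiv. rewrite Rpow_mult_distr, pow_inv. ring. }
  fold (p x). destruct (Req_EM_T x 0) as [-> | Hn].
  - rewrite Rabs_R0 in *. simpl in Ht. rewrite Rmult_0_l, Rmult_0_r in Ht.
    pose proof (Rabs_pos (v 0 - p 0)). pose proof (Rle_abs (v 0 - p 0)).
    pose proof (Rle_abs (- (v 0 - p 0))). rewrite Rabs_Ropp in *. lra.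
  - assert (0 < Rabs x) by (apply Rabs_pos_lt; auto).
    assert (0 < Rabs x ^ K) by (apply pow_lt; auto).
    split; [field; apply pow_nonzero; auto |].
    unfold Rdiv. rewrite Rabs_mult, Rabs_inv, <- RPow_abs.
    apply Rmult_le_reg_r with (Rabs x ^ K); auto.
    rewrite Rmult_assoc, Rinv_l by lra. simpl in Ht. nra.
Qed.

Lemma lim0_remainder (eps : R -> R) d C k : 0 < d ->
  (forall z, 0 < z -> Rabs (z * k) < d -> Rabs (eps (z * k)) <= C * Rabs (z * k)) ->
  lim0 (fun z => eps (z * k)) 0.
Proof.
  intros Hd H. apply lim0_bound. pose proof (Rabs_pos k).
  exists (d / (Rabs k + 1)), (C * Rabs k). split; [apply Rdiv_lt_0_compat; lra |].
  intros z Hz. assert (Hzk : Rabs (z * k) < d).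
  { rewrite Rabs_mult, Rabs_pos_eq by lra.
    pose proof (Rmult_lt_of_lt_div z d (Rabs k + 1) ltac:(lra) (proj2 Hz)). nra. }
  specialize (H z (proj1 Hz) Hzk). rewrite Rminus_0_r.
  rewrite Rabs_mult, (Rabs_pos_eq z) in H by lra. lra.
Qed.

Lemma exp_taylor K : exists d C (eps : R -> R), 0 < d /\ forall x, Rabs x < d ->
  exp x = sumR (map (fun m => / INR (fact m) * x ^ m) (seq 0 (S K))) + x ^ K * eps x /\
  Rabs (eps x) <= C * Rabs x.
Proof.
  assert (Hexp : forall x, exp_in x (exp x)).
  { intros x. unfold exp. destruct (exist_exp x). auto. }
  destruct (power_series_taylor (fun m => / INR (fact m)) 1 (exp 1) (fun _ => True) exp K) as [d [C [eps [Hd H]]]];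
    [lra | apply Hexp | intros x _; apply Hexp |].
  exists d, C, eps. split; auto.
Qed.


Lemma Fprod_Node F z ch : Fprod F z (Node ch) =
  F (z * INR (S (fsize ch))) * prodR (map (Fprod F z) ch).
Proof.
  rewrite <- tsize_Node. simpl. f_equal.
  induction ch; simpl; auto. rewrite IHch; auto.
Qed.

Lemma phi_fchar F s z w :
  fchar (phi F s z) w = Rpower s (- (z * INR (fsize w))) * prodR (map (Fprod F z) w).
Proof.
  induction w as [|t w IH]; unfold fchar in *; simpl.
  - rewrite Rmult_0_r, Ropp_0. unfold Rpower. rewrite Rmult_0_l, exp_0. ring.
  - rewrite IH. unfold phi. rewrite plus_INR.
    replace (- (z * (INR (tsize t) + INR (fsize w))))
      with (- (z * INR (tsize t)) + - (z * INR (fsize w))) by ring.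
    rewrite Rpower_plus. ring.
Qed.

Lemma phi_Node F s z ch : phi F s z (Node ch) =
  Rpower s (- z) * F (z * INR (S (fsize ch))) * fchar (phi F s z) ch.
Proof.
  unfold phi at 1. rewrite tsize_Node, Fprod_Node, phi_fchar, S_INR.
  replace (- (z * (INR (fsize ch) + 1))) with (- z + - (z * INR (fsize ch))) by ring.
  rewrite Rpower_plus. ring.
Qed.

Lemma phi_rescale F mu s z w : 0 < mu -> 0 < s ->
  fchar (phi F s z) w = fchar (phi F mu z) w * exp (- (z * INR (fsize w)) * ln (s / mu)).
Proof.
  intros Hmu Hs. rewrite !phi_fchar.
  replace s with (mu * (s / mu)) at 1 by (field; lra).
  rewrite <- Rpower_mult_distr by (try apply Rdiv_lt_0_compat; lra).
  unfold Rpower at 2. ring.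
Qed.

(** The pole-moment invariant *)

Section PoleMoments.
Variables (F : R -> R) (cm1 mu : R).

Definition cut_term (z : R) (c : forest * forest) : R :=
  fchar (tinv (phi F mu z)) (fst c) * fchar (phi F mu z) (snd c).

Definition moment (l : list (forest * forest)) (j : nat) (z : R) : R :=
  sumR (map (fun c => cut_term z c * INR (fsize (snd c)) ^ j) l).

Definition pole_order (k : nat) (h : R -> R) : Prop :=
  exists v, lim0 (fun z => z ^ k * h z) v.

Definition moment_limits (l : list (forest * forest)) (N d : nat) (p : nat -> R) : Prop :=
  (forall j, lim0 (fun z => z ^ j * moment l j z) (p j)) /\
  (forall j, (N < j)%nat -> p j = 0) /\
  p N = cm1 ^ N * INR (fact N) / INR d.

Definition pole_moments (l : list (forest * forest)) (N d : nat) : Prop :=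
  (forall c, In c l -> pole_order N (fun z => cut_term z c)) /\
  exists p, moment_limits l N d p.

Lemma pole_order_ext k h1 h2 :
  (forall z, 0 < z -> h1 z = h2 z) -> pole_order k h1 -> pole_order k h2.
Proof. intros E [l H]. exists l. eapply lim0_eq; [| apply H]. intros z Hz; simpl; rewrite E; auto. Qed.

Lemma pole_order_mult k1 k2 h1 h2 : pole_order k1 h1 -> pole_order k2 h2 ->
  pole_order (k1 + k2) (fun z => h1 z * h2 z).
Proof.
  intros [l1 H1] [l2 H2]. exists (l1 * l2).
  eapply lim0_eq; [| apply (lim0_mult _ _ _ _ H1 H2)]. intros z _. rewrite pow_add. ring.
Qed.

Lemma pole_order_sum {A} k (h : A -> R -> R) l : (forall x, In x l -> pole_order k (h x)) ->
  pole_order k (fun z => sumR (map (fun x => h x z) l)).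
Proof.
  induction l as [|x l IH]; intros H.
  - exists 0. apply (lim0_eq (fun _ => 0)); [intros; simpl; ring | apply lim0_const].
  - destruct (H x (or_introl eq_refl)) as [v1 H1]. destruct IH as [v2 H2]; [simpl in H; auto |].
    exists (v1 + v2). eapply lim0_eq; [| apply (lim0_plus _ _ _ _ H1 H2)]. intros; simpl; ring.
Qed.

Lemma pole_order_opp k h : pole_order k h -> pole_order k (fun z => - h z).
Proof. intros [l H]. exists (- l). eapply lim0_eq; [| apply (lim0_opp _ _ H)]. intros; simpl; ring. Qed.

Lemma pole_moments_nil : pole_moments [([], [])] 0 1.
Proof.
  split.
  - intros c [<- | []]. exists 1. eapply lim0_eq; [| apply lim0_const].
    intros; unfold cut_term, fchar; simpl. ring.
  - exists (fun j => match j with O => 1 | _ => 0 end). split; [| split].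
    + intros j. eapply lim0_eq; [| apply lim0_const].
      intros. unfold moment, cut_term, fchar. destruct j; simpl; ring.
    + intros [|j] Hj; [lia | auto].
    + simpl. field.
Qed.

Lemma cut_term_product z c1 c2 :
  cut_term z (fst c1 ++ fst c2, snd c1 ++ snd c2) = cut_term z c1 * cut_term z c2.
Proof. destruct c1, c2. unfold cut_term; cbn [fst snd]; rewrite !fchar_app; ring. Qed.

Lemma moment_product l1 l2 j z : moment (cut_product l1 l2) j z =
  sumR (map (fun i => C j i * moment l1 i z * moment l2 (j - i) z) (seq 0 (S j))).
Proof.
  unfold moment, cut_product. rewrite sumR_flat_map.
  transitivity (sumR (map (fun c1 => sumR (map (fun c2 => sumR (map (fun i =>
     C j i * (cut_term z c1 * INR (fsize (snd c1)) ^ i) *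
     (cut_term z c2 * INR (fsize (snd c2)) ^ (j - i))) (seq 0 (S j)))) l2)) l1)).
  { apply sumR_ext; intros [P1 R1] _. rewrite map_map. apply sumR_ext; intros [P2 R2] _.
    rewrite cut_term_product. cbn [fst snd]. rewrite fsize_app, plus_INR, binomial_sumR, <- sumR_scal.
    apply sumR_ext; intros i _. ring. }
  erewrite sumR_ext; [| intros c1 _; apply sumR_swap]. rewrite sumR_swap.
  apply sumR_ext; intros i _. rewrite Rmult_assoc, <- sumR_scal_r, <- sumR_scal.
  apply sumR_ext; intros c1 _. rewrite <- !sumR_scal. apply sumR_ext; intros; ring.
Qed.

Lemma pole_moments_product l1 l2 N1 N2 d1 d2 : (1 <= d1)%nat -> (1 <= d2)%nat ->
  pole_moments l1 N1 d1 -> pole_moments l2 N2 d2 ->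
  pole_moments (cut_product l1 l2) (N1 + N2) (d1 * d2).
Proof.
  intros Hd1 Hd2 [HD1 [p1 [Hl1 [Hz1 Hv1]]]] [HD2 [p2 [Hl2 [Hz2 Hv2]]]].
  assert (Hvanish : forall j i, (N1 + N2 < j)%nat \/ (j = N1 + N2 /\ i <> N1)%nat ->
            (i <= j)%nat -> p1 i * p2 (j - i)%nat = 0).
  { intros j i Hj Hi. destruct (Nat.le_gt_cases i N1).
    - rewrite Hz2 by lia. ring.
    - rewrite Hz1 by lia. ring. }
  split.
  - intros c Hc. unfold cut_product in Hc. apply in_flat_map in Hc as [c1 [Hc1 Hc]].
    apply in_map_iff in Hc as [c2 [<- Hc2]].
    eapply pole_order_ext; [intros; symmetry; apply cut_term_product |].
    apply pole_order_mult; auto.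
  - exists (fun j => sumR (map (fun i => C j i * p1 i * p2 (j - i)%nat) (seq 0 (S j)))).
    split; [| split].
    + intros j. eapply lim0_eq with (f := fun z => sumR (map (fun i =>
          C j i * (z ^ i * moment l1 i z) * (z ^ (j - i) * moment l2 (j - i) z)) (seq 0 (S j)))).
      { intros z _. rewrite moment_product, <- sumR_scal. apply sumR_ext. intros i Hi.
        apply in_seq in Hi.
        replace (z ^ j) with (z ^ i * z ^ (j - i)) by (rewrite <- pow_add; f_equal; lia). ring. }
      apply lim0_sumR. intros i _. apply lim0_mult; [apply lim0_mult; [apply lim0_const |] |]; auto.
    + intros j Hj. apply sumR_zero. intros i Hi. apply in_seq in Hi.
      rewrite Rmult_assoc, Hvanish by lia. ring.
    + rewrite (sumR_single _ _ N1) by (try lia; intros i Hi Hne;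
        rewrite Rmult_assoc, (Hvanish (N1 + N2)%nat i) by lia; ring).
      replace (N1 + N2 - N1)%nat with N2 by lia. rewrite Hv1, Hv2. unfold C.
      replace (N1 + N2 - N1)%nat with N2 by lia. rewrite !mult_INR, pow_add.
      assert (INR d1 <> 0) by (apply not_0_INR; lia).
      assert (INR d2 <> 0) by (apply not_0_INR; lia).
      pose proof (INR_fact_neq_0 N1). pose proof (INR_fact_neq_0 N2). field. auto.
Qed.

(** Grafting on a root: the Laurent expansion of F enters *)

Variables (a : nat -> R) (r : R).
Hypothesis Hr : 0 < r.
Hypothesis HLaurent :
  forall z, 0 < z < r -> infinite_sum (fun n => a n * z ^ n) (F z - cm1 / z).

Lemma laurent_taylor K : exists d C (eps : R -> R), 0 < d /\ forall x, 0 < x < d ->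
  F x = cm1 / x + sumR (map (fun m => a m * x ^ m) (seq 0 (S K))) + x ^ K * eps x /\
  Rabs (eps x) <= C * x.
Proof.
  destruct (power_series_taylor a (r / 2) (F (r / 2) - cm1 / (r / 2)) (fun x => 0 < x < r)
              (fun x => F x - cm1 / x) K) as [d [C [eps [Hd H]]]];
    [lra | apply HLaurent; lra | intros x Hx; apply HLaurent; auto |].
  exists (Rmin d r), C, eps. split; [apply Rmin_pos; lra |].
  intros x Hx. pose proof (Rmin_l d r). pose proof (Rmin_r d r).
  destruct (H x ltac:(lra) ltac:(rewrite Rabs_pos_eq; lra)) as [E1 E2].
  rewrite (Rabs_pos_eq x) in E2 by lra. split; [lra | auto].
Qed.

Lemma lim0_laurent_remainder (eps : R -> R) d C k : 0 < d -> 0 < k ->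
  (forall x, 0 < x < d -> Rabs (eps x) <= C * x) -> lim0 (fun z => eps (z * k)) 0.
Proof.
  intros Hd Hk H. apply (lim0_remainder eps d C k Hd). intros z Hz Hzk.
  assert (0 < z * k) by (apply Rmult_lt_0_compat; auto).
  rewrite (Rabs_pos_eq (z * k)) in * by lra. apply H; lra.
Qed.

Lemma lim0_mu_power : lim0 (fun z => Rpower mu (- z)) 1.
Proof.
  replace 1 with (Rpower mu (- 0)) by (unfold Rpower; rewrite Ropp_0, Rmult_0_l, exp_0; auto).
  apply lim0_continuous. unfold Rpower. reg.
Qed.

Definition graft_factor (n : nat) (z : R) : R := Rpower mu (- z) * F (z * INR (S n)).

Lemma pole_order_graft_factor n : pole_order 1 (graft_factor n).
Proof.
  destruct (laurent_taylor 0) as [d [C0 [eps [Hd H]]]].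
  assert (Hn : 0 < INR (S n)) by (apply lt_0_INR; lia).
  exists (1 * (cm1 / INR (S n) + 0 * (a 0%nat + 0))).
  apply lim0_ext with (f := fun z =>
    Rpower mu (- z) * (cm1 / INR (S n) + z * (a 0%nat + eps (z * INR (S n))))).
  { exists (d / INR (S n)). split; [apply Rdiv_lt_0_compat; auto |].
    intros z Hz. pose proof (Rmult_lt_of_lt_div _ _ _ Hn (proj2 Hz)).
    destruct (H (z * INR (S n)) ltac:(split; [apply Rmult_lt_0_compat |]; lra)) as [E _].
    unfold graft_factor. rewrite E. set (k := INR (S n)) in *. simpl. field. split; lra. }
  apply lim0_mult; [apply lim0_mu_power |]. apply lim0_plus; [apply lim0_const |].
  apply lim0_mult; [apply lim0_id |]. apply lim0_plus; [apply lim0_const |].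
  apply (lim0_laurent_remainder _ d C0); auto. intros x Hx; apply H; auto.
Qed.

Lemma cut_term_root z ch : cut_term z ([Node ch], []) = tinv (phi F mu z) (Node ch).
Proof. unfold cut_term. cbn [fst snd]. rewrite fchar_single. unfold fchar. simpl. ring. Qed.

Lemma cut_term_graft z P ch : cut_term z (P, [Node ch]) = cut_term z (P, ch) * graft_factor (fsize ch) z.
Proof. unfold cut_term, graft_factor. cbn [fst snd]. rewrite fchar_single, phi_Node. ring. Qed.

Definition graft_sum (l : list (forest * forest)) (j : nat) (z : R) : R :=
  sumR (map (fun c => cut_term z c * graft_factor (fsize (snd c)) z *
                        INR (S (fsize (snd c))) ^ j) l).

Lemma tinv_graft z ch : tinv (phi F mu z) (Node ch) = - graft_sum (fcuts ch) 0 z.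
Proof.
  rewrite tinv_Node. unfold graft_sum. f_equal. apply sumR_ext. intros [P R0] _.
  cbn [fst snd]. rewrite <- cut_term_graft. unfold cut_term. simpl. ring.
Qed.

Lemma moment_tree ch j z : moment (tcuts (Node ch)) j z =
  tinv (phi F mu z) (Node ch) * 0 ^ j + graft_sum (fcuts ch) j z.
Proof.
  unfold moment. rewrite tcuts_Node. cbn [map sumR fold_right]. rewrite cut_term_root.
  cbn [snd fsize fold_right INR]. f_equal. rewrite map_map. unfold graft_sum.
  apply sumR_ext. intros [P R0] _. cbn [fst snd].
  rewrite cut_term_graft, fsize_single, tsize_Node. reflexivity.
Qed.

Lemma moment_tree_zero ch z : moment (tcuts (Node ch)) 0 z = 0.
Proof. rewrite moment_tree, tinv_graft. simpl. ring. Qed.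

Definition shifted_moment (l : list (forest * forest)) (i : nat) (z : R) : R :=
  sumR (map (fun c => cut_term z c * INR (S (fsize (snd c))) ^ i) l).

Lemma shifted_moment_binomial l i z :
  shifted_moment l i z = sumR (map (fun k => C i k * moment l k z) (seq 0 (S i))).
Proof.
  unfold shifted_moment, moment.
  transitivity (sumR (map (fun c => sumR (map (fun k =>
    C i k * (cut_term z c * INR (fsize (snd c)) ^ k)) (seq 0 (S i)))) l)).
  { apply sumR_ext. intros c _. rewrite S_INR, binomial_sumR, <- sumR_scal.
    apply sumR_ext. intros k _. rewrite pow1. ring. }
  rewrite sumR_swap. apply sumR_ext. intros k _. apply sumR_scal.
Qed.

(* Shifting does not change the limits: z^i (n+1)^i and z^i n^i differ by lower powers. *)
Lemma shifted_moment_limit l (p : nat -> R) :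
  (forall j, lim0 (fun z => z ^ j * moment l j z) (p j)) ->
  forall i, lim0 (fun z => z ^ i * shifted_moment l i z) (p i).
Proof.
  intros HL i.
  eapply lim0_eq with (f := fun z => sumR (map (fun k =>
    C i k * z ^ (i - k) * (z ^ k * moment l k z)) (seq 0 (S i)))).
  { intros z _. rewrite shifted_moment_binomial, <- sumR_scal. apply sumR_ext.
    intros k Hk. apply in_seq in Hk.
    replace (z ^ i) with (z ^ (i - k) * z ^ k) by (rewrite <- pow_add; f_equal; lia). ring. }
  apply (lim0_lim_eq _ (sumR (map (fun k => C i k * 0 ^ (i - k) * p k) (seq 0 (S i))))).
  { rewrite (sumR_single _ _ i); [| lia | intros k Hk Hne; rewrite pow_i by lia; ring].
    rewrite Nat.sub_diag, C_diag. simpl. ring. }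
  apply lim0_sumR. intros k _. apply lim0_mult; auto.
  apply lim0_mult; [apply lim0_const | apply lim0_pow].
Qed.

(* Per-cut expansion of z^{j+1} T (n^{j+1} mu^{-z} F(z n)) along the Laurent
   expansion of F to order N + 1: the pole lowers the power of n by one, the
   regular part shifts it up, and the remainder carries z^N T. *)
Lemma graft_term_expansion z n T Rp e j N (ms : list nat) : z <> 0 -> n <> 0 ->
  z ^ S j * (T * (Rp * (cm1 / (z * n) + sumR (map (fun m => a m * (z * n) ^ m) ms) +
                        (z * n) ^ S N * e)) * n ^ S j) =
  Rp * (cm1 * (z ^ j * (T * n ^ j)) +
        sumR (map (fun m => a m * (z ^ (S j + m) * (T * n ^ (S j + m)))) ms) +
        z ^ N * T * (z ^ S (S j) * n ^ (S j + S N) * e)).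
Proof.
  intros Hz Hn.
  replace (sumR (map (fun m => a m * (z ^ (S j + m) * (T * n ^ (S j + m)))) ms))
    with (z ^ S j * T * n ^ S j * sumR (map (fun m => a m * (z * n) ^ m) ms)).
  - rewrite pow_add, Rpow_mult_distr. simpl pow. field. auto.
  - rewrite <- sumR_scal. apply sumR_ext. intros m _. rewrite !pow_add, Rpow_mult_distr. ring.
Qed.

Lemma tree_moment_expansion ch j z d0 (eps : R -> R) :
  (forall x, 0 < x < d0 -> F x = cm1 / x +
     sumR (map (fun m => a m * x ^ m) (seq 0 (S (S (fsize ch))))) + x ^ S (fsize ch) * eps x) ->
  0 < z -> z * INR (S (fsize ch)) < d0 ->
  z ^ S j * moment (tcuts (Node ch)) (S j) z =
  Rpower mu (- z) *
    (cm1 * (z ^ j * shifted_moment (fcuts ch) j z) +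
     sumR (map (fun m => a m * (z ^ (S j + m) * shifted_moment (fcuts ch) (S j + m) z))
               (seq 0 (S (S (fsize ch))))) +
     sumR (map (fun c => z ^ fsize ch * cut_term z c *
                  (z ^ S (S j) * INR (S (fsize (snd c))) ^ (S j + S (fsize ch)) *
                   eps (z * INR (S (fsize (snd c)))))) (fcuts ch))).
Proof.
  intros HG Hz Hzd. set (N := fsize ch) in *. set (ms := seq 0 (S (S N))).
  rewrite moment_tree, pow_i, Rmult_0_r, Rplus_0_l by lia. unfold graft_sum, shifted_moment.
  transitivity (sumR (map (fun c => Rpower mu (- z) *
    (cm1 * (z ^ j * (cut_term z c * INR (S (fsize (snd c))) ^ j)) +
     sumR (map (fun m => a m * (z ^ (S j + m) *
                 (cut_term z c * INR (S (fsize (snd c))) ^ (S j + m)))) ms) +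
     z ^ N * cut_term z c * (z ^ S (S j) * INR (S (fsize (snd c))) ^ (S j + S N) *
                             eps (z * INR (S (fsize (snd c))))))) (fcuts ch))).
  - rewrite <- sumR_scal. apply sumR_ext. intros [P R0] Hc.
    pose proof (fcuts_size ch _ Hc) as Hsz. cbn [fst snd] in *.
    set (n := INR (S (fsize R0))).
    assert (Hn : 0 < n) by (apply lt_0_INR; lia).
    assert (Hzn : 0 < z * n < d0).
    { split; [apply Rmult_lt_0_compat; lra |]. apply Rle_lt_trans with (z * INR (S N)); auto.
      apply Rmult_le_compat_l; [lra | apply le_INR; lia]. }
    unfold graft_factor. fold n. rewrite (HG _ Hzn).
    rewrite <- (graft_term_expansion z n (cut_term z (P, R0)) _ _ j N ms) by lra. reflexivity.
  - rewrite sumR_scal, !sumR_plus, !sumR_scal, sumR_swap. do 3 f_equal.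
    apply sumR_ext. intros m _. rewrite !sumR_scal. reflexivity.
Qed.

Lemma tree_moment_limit ch (p : nat -> R) :
  (forall c, In c (fcuts ch) -> pole_order (fsize ch) (fun z => cut_term z c)) ->
  (forall j, lim0 (fun z => z ^ j * moment (fcuts ch) j z) (p j)) ->
  forall j, lim0 (fun z => z ^ S j * moment (tcuts (Node ch)) (S j) z)
    (cm1 * p j + sumR (map (fun m => a m * p (S j + m)%nat) (seq 0 (S (S (fsize ch)))))).
Proof.
  intros Hpole HL j. set (N := fsize ch) in *.
  destruct (laurent_taylor (S N)) as [d0 [C0 [eps [Hd0 HG]]]].
  assert (HNp : 0 < INR (S N)) by (apply lt_0_INR; lia).
  eapply lim0_ext.
  { exists (d0 / INR (S N)). split; [apply Rdiv_lt_0_compat; auto |].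
    intros z Hz. symmetry. apply (tree_moment_expansion ch j z d0 eps).
    - intros x Hx. apply HG, Hx.
    - apply Hz.
    - apply Rmult_lt_of_lt_div; [auto | apply Hz]. }
  apply (lim0_lim_eq _ (1 * (cm1 * p j +
    sumR (map (fun m => a m * p (S j + m)%nat) (seq 0 (S (S N)))) + 0))); [ring |].
  apply lim0_mult; [apply lim0_mu_power |]. apply lim0_plus; [apply lim0_plus |].
  - apply lim0_mult; [apply lim0_const | apply shifted_moment_limit; auto].
  - apply lim0_sumR. intros m _.
    apply lim0_mult; [apply lim0_const | apply shifted_moment_limit; auto].
  - apply lim0_sumR0. intros c Hc. destruct (Hpole c Hc) as [v Hv].
    apply (lim0_lim_eq _ (v * (0 ^ S (S j) * INR (S (fsize (snd c))) ^ (S j + S N) * 0)));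
      [simpl; ring |].
    apply lim0_mult; [exact Hv |].
    apply lim0_mult; [apply lim0_mult; [apply lim0_pow | apply lim0_const] |].
    apply (lim0_laurent_remainder _ d0 C0); [auto | apply lt_0_INR; lia |].
    intros x Hx. apply HG, Hx.
Qed.

Lemma pole_moments_tree ch d : (1 <= d)%nat -> pole_moments (fcuts ch) (fsize ch) d ->
  pole_moments (tcuts (Node ch)) (S (fsize ch)) (S (fsize ch) * d).
Proof.
  intros Hd [Hpole [p [HL [HZ HV]]]]. set (N := fsize ch) in *.
  assert (Hgraft : forall c, In c (fcuts ch) ->
            pole_order (S N) (fun z => cut_term z c * graft_factor (fsize (snd c)) z)).
  { intros c Hc. replace (S N) with (N + 1)%nat by lia.
    apply pole_order_mult; auto. apply pole_order_graft_factor. }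
  split.
  - intros c Hc. rewrite tcuts_Node in Hc. destruct Hc as [<- | Hc].
    + apply (pole_order_ext _ (fun z => - graft_sum (fcuts ch) 0 z)).
      { intros z _. rewrite cut_term_root, tinv_graft. reflexivity. }
      apply pole_order_opp. unfold graft_sum. apply pole_order_sum. intros c Hc.
      apply (pole_order_ext _ (fun z => cut_term z c * graft_factor (fsize (snd c)) z));
        [intros; simpl; ring | auto].
    + apply in_map_iff in Hc as [[P R0] [<- Hc]]. cbn [fst snd].
      apply (pole_order_ext _ (fun z => cut_term z (P, R0) * graft_factor (fsize R0) z)).
      { intros z _. rewrite cut_term_graft. reflexivity. }
      apply (Hgraft (P, R0) Hc).
  - exists (fun j => match j with
                    | O => 0
                    | S j => cm1 * p j + sumR (map (fun m => a m * p (S j + m)%nat) (seq 0 (S (S N))))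
                    end).
    split; [| split].
    + intros [|j].
      * apply (lim0_eq (fun _ => 0)); [| apply lim0_const].
        intros z _. rewrite moment_tree_zero. ring.
      * apply tree_moment_limit; auto.
    + intros [|j] Hj; [lia |].
      rewrite HZ, sumR_zero by (lia || (intros m _; rewrite HZ by lia; ring)). ring.
    + rewrite sumR_zero by (intros m _; rewrite HZ by lia; ring).
      rewrite HV, fact_simpl, !mult_INR.
      assert (INR d <> 0) by (apply not_0_INR; lia). pose proof (INR_fact_neq_0 N).
      simpl pow. field. split; auto. apply not_0_INR; lia.
Qed.


Lemma pole_moments_tcuts t : pole_moments (tcuts t) (tsize t) (tfact t).
Proof.
  induction t as [ch Hch] using tree_nested_ind.
  assert (Hf : pole_moments (fcuts ch) (fsize ch) (ffact ch)).
  { induction Hch as [|t ts Ht _ IH]; [exact pole_moments_nil |].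
    rewrite fcuts_cons. apply pole_moments_product; auto using tfact_pos, ffact_pos. }
  rewrite tsize_Node, tfact_Node. apply pole_moments_tree; auto using ffact_pos.
Qed.

Lemma pole_moments_fcuts w : pole_moments (fcuts w) (fsize w) (ffact w).
Proof.
  induction w as [|t ts IH]; [exact pole_moments_nil |].
  rewrite fcuts_cons. apply pole_moments_product; auto using tfact_pos, ffact_pos.
  apply pole_moments_tcuts.
Qed.

(** Expansion of phi_{R,s} in L = ln (s/mu) *)

Hypothesis Hmu : 0 < mu.

Lemma phiR_cut_sum s z w : 0 < s -> phiR F mu s z w =
  sumR (map (fun c => cut_term z c * exp (z * (- INR (fsize (snd c)) * ln (s / mu)))) (fcuts w)).
Proof.
  intros Hs. unfold phiR. apply sumR_ext. intros c _.
  unfold cut_term. rewrite (phi_rescale F mu s z) by auto.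
  replace (- (z * INR (fsize (snd c))) * ln (s / mu))
    with (z * (- INR (fsize (snd c)) * ln (s / mu))) by ring. ring.
Qed.

Lemma exp_cut_expansion l N L z d (eps : R -> R) :
  (forall c, In c l -> (fsize (snd c) <= N)%nat) ->
  (forall x, Rabs x < d ->
     exp x = sumR (map (fun m => / INR (fact m) * x ^ m) (seq 0 (S N))) + x ^ N * eps x) ->
  0 < z -> z < d / (INR N * Rabs L + 1) ->
  sumR (map (fun c => cut_term z c * exp (z * (- INR (fsize (snd c)) * L))) l) =
  sumR (map (fun m => / INR (fact m) * (- L) ^ m * (z ^ m * moment l m z)) (seq 0 (S N))) +
  sumR (map (fun c => z ^ N * cut_term z c *
               ((- INR (fsize (snd c)) * L) ^ N * eps (z * (- INR (fsize (snd c)) * L)))) l).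
Proof.
  intros Hsize HE Hz Hzd. unfold moment.
  erewrite (sumR_ext _ _ (seq 0 (S N)));
    [| intros m _; rewrite <- !sumR_scal; reflexivity].
  rewrite sumR_swap, <- sumR_plus. apply sumR_ext. intros c Hc.
  set (n := INR (fsize (snd c))).
  assert (Hn : 0 <= n <= INR N) by (split; [apply pos_INR | apply le_INR, Hsize, Hc]).
  assert (Hx : Rabs (z * (- n * L)) < d).
  { rewrite !Rabs_mult, Rabs_Ropp, (Rabs_pos_eq z), (Rabs_pos_eq n) by lra.
    pose proof (Rabs_pos L). pose proof (pos_INR N).
    pose proof (Rmult_lt_of_lt_div z d (INR N * Rabs L + 1) ltac:(nra) Hzd).
    assert (n * Rabs L <= INR N * Rabs L) by (apply Rmult_le_compat_r; lra). nra. }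
  rewrite (HE _ Hx), Rmult_plus_distr_l. f_equal.
  - rewrite <- sumR_scal. apply sumR_ext. intros m _.
    replace (- n * L) with (n * (- L)) by ring. rewrite !Rpow_mult_distr. ring.
  - rewrite (Rpow_mult_distr z). ring.
Qed.

Lemma phiR_limit w (p : nat -> R) s : 0 < s ->
  (forall c, In c (fcuts w) -> pole_order (fsize w) (fun z => cut_term z c)) ->
  (forall j, lim0 (fun z => z ^ j * moment (fcuts w) j z) (p j)) ->
  lim0 (fun z => phiR F mu s z w)
    (sumR (map (fun m => / INR (fact m) * (- ln (s / mu)) ^ m * p m) (seq 0 (S (fsize w))))).
Proof.
  intros Hs Hpole HL. set (N := fsize w) in *. set (L := ln (s / mu)).
  destruct (exp_taylor N) as [d [C0 [eps [Hd HE]]]].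
  apply (lim0_lim_eq _ (sumR (map (fun m => / INR (fact m) * (- L) ^ m * p m) (seq 0 (S N))) +
                        sumR (map (fun _ : forest * forest => 0) (fcuts w))));
    [rewrite (sumR_zero (fun _ : forest * forest => 0)) by auto; ring |].
  apply lim0_ext with (f := fun z =>
    sumR (map (fun m => / INR (fact m) * (- L) ^ m * (z ^ m * moment (fcuts w) m z)) (seq 0 (S N))) +
    sumR (map (fun c => z ^ N * cut_term z c *
                 ((- INR (fsize (snd c)) * L) ^ N * eps (z * (- INR (fsize (snd c)) * L)))) (fcuts w))).
  { exists (d / (INR N * Rabs L + 1)).
    split; [apply Rdiv_lt_0_compat; auto; pose proof (pos_INR N); pose proof (Rabs_pos L); nra |].
    intros z Hz. rewrite phiR_cut_sum by auto. symmetry. apply (exp_cut_expansion _ _ _ _ d eps); try apply Hz.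
    - intros c Hc. pose proof (fcuts_size w _ Hc). lia.
    - intros x Hx. apply HE, Hx. }
  apply lim0_plus; apply lim0_sumR.
  - intros m _. apply lim0_mult; [apply lim0_const | auto].
  - intros c Hc. destruct (Hpole c Hc) as [v Hv].
    apply (lim0_lim_eq _ (v * ((- INR (fsize (snd c)) * L) ^ N * 0))); [ring |].
    apply lim0_mult; [exact Hv |]. apply lim0_mult; [apply lim0_const |].
    apply (lim0_remainder _ d C0); auto. intros z _ Hx. apply HE, Hx.
Qed.

End PoleMoments.

Lemma peval_map f n x :
  peval (map f (seq 0 n)) x = sumR (map (fun j => f j * x ^ j) (seq 0 n)).
Proof.
  assert (H : forall k, x ^ k * peval (map f (seq k n)) x =
                        sumR (map (fun j => f j * x ^ j) (seq k n))).
  { induction n; intros k; simpl; [ring |]. rewrite <- IHn. simpl. ring. }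
  rewrite <- H. simpl. ring.
Qed.

Lemma nth_map_seq (f : nat -> R) n k : (k < n)%nat -> nth k (map f (seq 0 n)) 0 = f k.
Proof.
  intros Hk. rewrite (nth_indep _ _ (f 0%nat)) by (rewrite length_map, length_seq; auto).
  rewrite map_nth, seq_nth by auto. reflexivity.
Qed.

(* The
   hypotheses on f only serve to produce F and its Laurent expansion. *)
Theorem mainTheorem8
  (f F : R -> R) (c : R)
  (Hcont : cont_on_nonneg f)
  (Hasym : exists eps K M, 0 < eps /\ 0 < M /\
             forall t, M <= t -> Rabs (f t - c / t) <= K * Rpower t (- 1 - eps))
  (HF : forall z, 0 < z < 1 -> mellin_at f z (F z))
  (cm1 : R) (a : nat -> R) (r : R) (Hr : 0 < r)
  (HLaurent : forall z, 0 < z < r -> infinite_sum (fun n => a n * z ^ n) (F z - cm1 / z))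
  (mu : R) (Hmu : 0 < mu)
  (w : forest) :
  exists P : list R,
    length P = S (fsize w) /\
    nth (fsize w) P 0 = (- cm1) ^ (fsize w) / INR (ffact w) /\
    forall s, 0 < s ->
      limit1_in (fun z => phiR F mu s z w) (fun z => 0 < z) (peval P (ln (s / mu))) 0.
Proof.
  destruct (pole_moments_fcuts F cm1 mu a r Hr HLaurent w) as [Hpole [p [Hlim [_ Htop]]]].
  set (N := fsize w) in *.
  exists (map (fun m => / INR (fact m) * (-1) ^ m * p m) (seq 0 (S N))).
  split; [| split].
  - rewrite length_map, length_seq. reflexivity.
  - rewrite nth_map_seq, Htop by lia.
    replace (- cm1) with ((-1) * cm1) by ring. rewrite Rpow_mult_distr.
    pose proof (INR_fact_neq_0 N). pose proof (ffact_pos w).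
    field. split; [apply not_0_INR; lia | auto].
  - intros s Hs. rewrite peval_map.
    apply (lim0_lim_eq _ (sumR (map (fun m => / INR (fact m) * (- ln (s / mu)) ^ m * p m)
                                    (seq 0 (S N))))).
    + apply sumR_ext. intros m _.
      replace (- ln (s / mu)) with ((-1) * ln (s / mu)) by ring. rewrite Rpow_mult_distr. ring.
    + apply phiR_limit; auto.
Qed.
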